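(* Let $p$ be a prime and let $G$ be a nontrivial finite abelian $p$-group. Then $n_G=\exp(G)$ if and only if $G$ is either cyclic or elementary abelian.
   Context: For a finite group $G$ and $x\in G$, let $I_{\mathcal C}(x)=\{y\in G : \langle x,y\rangle \text{ is cyclic}\}$. For a nontrivial finite group $G$, $n_G=\max\{|I_{\mathcal C}(x)| : x\in G\setminus\{1\}\}$. $\exp(G)$ denotes the exponent of $G$. *)

From mathcomp Require Import all_boot all_fingroup all_solvable.
Set Implicit Arguments. Unset Strict Implicit. Unset Printing Implicit Defensive.
Local Open Scope group_scope.

Definition cyclicizer (gT : finGroupType) (G : {set gT}) (x : gT) : {set gT} :=
  [set y in G | cyclic <<[set x; y]>>].

Definition nG (gT : finGroupType) (G : {set gT}) : nat :=
  \max_(x in G^#) #|cyclicizer G x|.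

(* For cyclic G every pair of elements generates a cyclic group, so every
   cyclicizer is G itself; for elementary abelian G a cyclic subgroup is of
   order p, so the cyclicizer of x != 1 is <[x]>.  In both cases all
   cyclicizers have size exp(G).  Conversely, if G is neither, take g of
   maximal order p^k with k >= 2 and an element y of order p outside <[g]>
   (it exists because Omega_1(G) has rank at least 2).  Then g and gy have the
   same p^(k-1)-th power x != 1, so the cyclicizer of x contains <[g]> and gy,
   and n_G > |<[g]>| = exp(G). *)

From mathcomp Require Import all_boot all_fingroup all_solvable.
Set Implicit Arguments. Unset Strict Implicit. Unset Printing Implicit Defensive.
Local Open Scope group_scope.

Section Cyclicizer.

Variables (gT : finGroupType) (G : {group gT}).

Lemma cyclicizer_sub x : cyclicizer G x \subset G.
Proof. by apply/subsetP => y; rewrite inE => /andP[]. Qed.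

Lemma cycle_sub_cyclicizer x z :
  z \in G -> x \in <[z]> -> <[z]> \subset cyclicizer G x.
Proof.
move=> Gz xz; apply/subsetP => y yz.
rewrite inE (subsetP _ y yz) ?cycle_subG //=.
apply: cyclicS (cycle_cyclic z).
by rewrite gen_subG subUset !sub1set xz yz.
Qed.

Lemma cyclicizer_cyclic x : cyclic G -> x \in G -> cyclicizer G x = G.
Proof.
case/cyclicP=> z defG Gx; apply/eqP; rewrite eqEsubset cyclicizer_sub /=.
have Gz : z \in G by rewrite defG cycle_id.
by rewrite {1}defG cycle_sub_cyclicizer // -defG.
Qed.

Lemma cyclicizer_abelem p x :
  p.-abelem G -> x \in G -> x != 1 -> cyclicizer G x = <[x]>.
Proof.
move=> abG Gx ntx; apply/eqP; rewrite eqEsubset cycle_sub_cyclicizer ?cycle_id //.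
rewrite andbT; apply/subsetP => y; rewrite inE => /andP[Gy cycH].
set H := <<[set x; y]>> in cycH.
have sHG : H \subset G by rewrite gen_subG subUset !sub1set Gx Gy.
have xH : x \in H by rewrite mem_gen // !inE eqxx.
have ntH : H :!=: 1 by apply/trivgPn; exists x.
have -> : <[x]> = H.
  apply/eqP; rewrite eqEcard cycle_subG xH -orderE (abelem_order_p abG Gx ntx).
  by rewrite (cyclic_abelem_prime (abelemS sHG abG) cycH ntH) leqnn.
by rewrite /H mem_gen // !inE eqxx orbT.
Qed.

Lemma cycle_proper_cyclicizer g y n :
    g \in G -> y \in G -> commute g y -> y \notin <[g]> -> y ^+ n = 1 ->
  <[g]> \proper cyclicizer G (g ^+ n).
Proof.
move=> Gg Gy cgy ygN yn1.
have gyN : g * y \notin <[g]>.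
  by apply: contra ygN => gyg; rewrite -(mulKg g y) groupM ?groupV ?cycle_id.
have gy_pow : (g * y) ^+ n = g ^+ n by rewrite expgMn // yn1 mulg1.
rewrite properE cycle_sub_cyclicizer ?mem_cycle //=.
apply/subsetPn; exists (g * y) => //.
apply: subsetP (cycle_id (g * y)).
by rewrite cycle_sub_cyclicizer ?groupM // -gy_pow mem_cycle.
Qed.

End Cyclicizer.

Lemma leq_nG (gT : finGroupType) (G : {set gT}) x :
  x \in G^# -> #|cyclicizer G x| <= nG G.
Proof. exact: leq_bigmax_cond. Qed.

Lemma nG_const (gT : finGroupType) (G : {group gT}) c :
  G :!=: 1 -> (forall x, x \in G^# -> #|cyclicizer G x| = c) -> nG G = c.
Proof.
move=> ntG cG; apply/eqP; rewrite eqn_leq; apply/andP; split.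
  by apply/bigmax_leqP => x Gx; rewrite cG.
have [x Gx ntx] := trivgPn _ ntG.
have G'x : x \in G^# by rewrite !inE ntx Gx.
by rewrite -(cG x G'x) leq_nG.
Qed.

Lemma exponent_abelem (gT : finGroupType) p (G : {group gT}) :
  prime p -> p.-abelem G -> G :!=: 1 -> exponent G = p.
Proof.
move=> p_pr abG ntG; apply/(prime_nt_dvdP p_pr).
  by apply: contraNneq ntG => exp1; rewrite trivg_exponent exp1.
by move: abG; rewrite abelemE // => /andP[].
Qed.

Lemma Ohm1_not_sub_cycle (gT : finGroupType) (G : {group gT}) g :
  abelian G -> ~~ cyclic G -> ~~ ('Ohm_1(G) \subset <[g]>).
Proof.
move=> cGG; apply: contra => sOg.
rewrite abelian_rank1_cyclic // -rank_Ohm1 (leq_trans (rankS sOg)) //.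
by rewrite rank_cycle leq_b1.
Qed.

Lemma exponent_lt_nG (gT : finGroupType) p (G : {group gT}) :
    prime p -> p.-group G -> abelian G -> ~~ cyclic G -> ~~ p.-abelem G ->
  exponent G < nG G.
Proof.
move=> p_pr pG cGG ncycG nabG.
have [g Gg expG] := exponent_witness (abelian_nil cGG).
have [k og] := p_natP (mem_p_elt pG Gg).
have {k og} [k og] : exists k, #[g] = (p ^ k.+2)%N.
  case: k og => [|[|k]] og; last by exists k.
  - by case/negP: nabG; rewrite abelemE // cGG expG og dvd1n.
  - by case/negP: nabG; rewrite abelemE // cGG expG og expn1 dvdnn.
have [y Oy ygN] := subsetPn (Ohm1_not_sub_cycle g cGG ncycG).
have Gy := subsetP (Ohm_sub 1 G) y Oy.
have yp1 : y ^+ (p ^ k.+1) = 1.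
  have [_ yp] := abelemP p_pr (Ohm1_abelem pG cGG).
  by rewrite expnS expgM yp // expg1n.
have ntx : g ^+ (p ^ k.+1) != 1.
  by rewrite -order_dvdn og dvdn_Pexp2l ?prime_gt1 // ltnn.
have G'x : g ^+ (p ^ k.+1) \in G^# by rewrite !inE ntx groupX.
rewrite expG orderE (leq_trans _ (leq_nG G'x)) // proper_card //.
exact: cycle_proper_cyclicizer Gg Gy (centsP cGG g Gg y Gy) ygN yp1.
Qed.

Theorem proposition2p5 (p : nat) (gT : finGroupType) (G : {group gT}) :
  prime p -> p.-group G -> abelian G -> G :!=: 1 ->
  (nG G = exponent G <-> cyclic G \/ p.-abelem G).
Proof.
move=> p_pr pG cGG ntG; split => [nGE | [cycG | abG]].
- have [cycG | ncycG] := boolP (cyclic G); [by left | right].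
  apply/negPn/negP => nabG.
  by have := exponent_lt_nG p_pr pG cGG ncycG nabG; rewrite nGE ltnn.
- rewrite (exponent_cyclic cycG); apply: nG_const => // x /setD1P[_ Gx].
  by rewrite cyclicizer_cyclic.
- rewrite (exponent_abelem p_pr abG ntG); apply: nG_const => // x /setD1P[ntx Gx].
  by rewrite (cyclicizer_abelem abG Gx ntx) -orderE (abelem_order_p abG).
Qed.
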